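(* Let $d\ge2$ and $y\in Y_d$. If the set $A_{d+1}^+\tau_y\subset X_{d+1}$ is unbounded (i.e. has noncompact closure), then $y$ is L.
   Context: $X_k$ is the space of unimodular lattices in $\mathbb{R}^k$ ($\cong SL_k(\mathbb{R})/SL_k(\mathbb{Z})$) with the quotient topology. $Y_d$ is the space of grids $x+v$ ($x\in X_d$, $v\in\mathbb{R}^d$). For a grid $y=x+v$, $\tau_y\in X_{d+1}$ is the lattice $\{(u+nv,n)^t:u\in x,\ n\in\mathbb{Z}\}$ (equivalently $\begin{pmatrix}g&v\\0&1\end{pmatrix}SL_{d+1}(\mathbb{Z})$ where $x$ is spanned by the columns of $g$). $A_{d+1}^+=\{\mathrm{diag}(e^{t_1},\dots,e^{t_{d+1}}): \sum t_i=0,\ t_i>0\text{ for }i=1,\dots,d\}$. For $w\in\mathbb{R}^d$, $N(w)=\prod_iw_i$; $N(y)=\inf\{|N(w)|:w\in y\}$; $n(x+v)=x+nv$. A grid $y$ is L if $\inf_{n\ne0}|nN(ny)|=0$. *)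

From HB Require Import structures.
From mathcomp Require Import all_boot all_order all_algebra.
From mathcomp Require Import all_classical all_reals all_analysis.
Set Implicit Arguments. Unset Strict Implicit. Unset Printing Implicit Defensive.
Import Order.TTheory GRing.Theory Num.Theory.
Import numFieldNormedType.Exports.
Local Open Scope classical_set_scope.
Local Open Scope ring_scope.

(* A unimodular lattice in R^k is represented by g : 'M_k with \det g = 1;
   it is the lattice spanned by the columns of g, i.e. the coset g SL_k(Z). *)

Definition same_lattice (R : realType) (k : nat) (g h : 'M[R]_k) : Prop :=
  exists gam : 'M[int]_k, \det gam = 1 /\ h = g *m map_mx intr gam.

(* A set S of lattices (given by representatives) is bounded in X_k, i.e.
   has compact closure, iff it lies in the image pi(K) of a compact subset
   K of SL_k(R) under the quotient map pi. *)
Definition bounded_in_X (R : realType) (k : nat) (S : set 'M[R]_k) : Prop :=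
  exists K : set 'M[R]_k, compact K /\ K `<=` [set h | \det h = 1] /\
    forall g, S g -> exists2 h, K h & same_lattice g h.

(* tau_y for the grid y = x + v, x spanned by the columns of g *)
Definition tau (R : realType) (d : nat) (g : 'M[R]_d) (v : 'cV[R]_d)
  : 'M[R]_(d + 1) := block_mx g v 0 1%:M.

Definition Aplus (R : realType) (d : nat) : set 'M[R]_(d + 1) :=
  [set a | exists t : 'rV[R]_(d + 1),
     \sum_i t 0 i = 0 /\ (forall i : 'I_(d + 1), (i < d)%N -> 0 < t 0 i) /\
     a = diag_mx (map_mx (@expR R) t)].

Definition Aplus_orbit (R : realType) (d : nat) (g : 'M[R]_d) (v : 'cV[R]_d)
  : set 'M[R]_(d + 1) := [set a *m tau g v | a in @Aplus R d].

Definition Nw (R : realType) (d : nat) (w : 'cV[R]_d) : R := \prod_i w i 0.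

Definition grid (R : realType) (d : nat) (g : 'M[R]_d) (v : 'cV[R]_d)
  : set 'cV[R]_d := [set g *m map_mx intr u + v | u in [set: 'cV[int]_d]].

Definition Ngrid (R : realType) (d : nat) (g : 'M[R]_d) (v : 'cV[R]_d) : R :=
  inf [set `|Nw w| | w in grid g v].

Definition is_L (R : realType) (d : nat) (g : 'M[R]_d) (v : 'cV[R]_d) : Prop :=
  inf [set `|(n%:~R : R) * Ngrid g (n%:~R *: v)| | n in [set n : int | n != 0]] = 0.

(* If y is not L, then |n N(x u + n v)| >= del > 0 for all u and all n <> 0.
   For a in A^+ and a nonzero integer vector z = (u, n), the vector a tau_y z
   is either an expanded copy of the vector x u (when n = 0), or has its
   coordinate product equal to n N(x u + n v) (since det a = 1); in the second
   case, if all its coordinates were small its squared length would dominate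
   that product squared, which is at least del^2.  Hence the lattices a tau_y
   have no vector shorter than a fixed eps > 0, and Hermite reduction (the core
   of Mahler's compactness criterion) gives each of them a basis with
   uniformly bounded entries, i.e. puts them all in one compact subset of
   SL_{d+1}(R). *)

From HB Require Import structures.
From mathcomp Require Import all_boot all_order all_algebra perm.
From mathcomp Require Import all_classical all_reals all_analysis.
From mathcomp Require Import ring lra zify.
Set Implicit Arguments.
Unset Strict Implicit.
Unset Printing Implicit Defensive.
Import Order.TTheory GRing.Theory Num.Theory.
Import numFieldNormedType.Exports.
Local Open Scope classical_set_scope.
Local Open Scope ring_scope.

Section SpecialLinearCompact.
Variable R : realType.

Lemma continuous_mx_entries (T : topologicalType) m n (f : T -> 'M[R]_(m, n)) :
  (forall i j, continuous (fun x => f x i j)) -> continuous f.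
Proof.
move=> hf x A [P Pn sPA].
have h : \forall y \near x, forall ij : 'I_m * 'I_n, P ij.1 ij.2 (f y ij.1 ij.2).
  by apply: filter_forall => -[i j] /=; exact: (hf i j x _ (Pn i j)).
by apply: filterS h => y hy; apply: sPA => i j; exact: (hy (i, j)).
Qed.

Lemma det_continuous n : continuous (fun A : 'M[R]_n => \det A).
Proof.
apply: continuous_big; first exact: add_continuous.
move=> p _ A.
have prod_continuous : continuous (fun B : 'M[R]_n => \prod_i B i (p i)).
  apply: continuous_big; first exact: mul_continuous.
  by move=> i _; exact: coord_continuous.
apply: (continuousM (s := fun=> _) (t := fun B : 'M[R]_n => \prod_i B i (p i))).
  exact: cst_continuous.
exact: prod_continuous.
Qed.

Lemma closed_det1 n : closed [set A : 'M[R]_n | \det A = 1].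
Proof.
have -> : [set A : 'M[R]_n | \det A = 1] = (fun A => \det A) @^-1` [set 1] by [].
apply: preimage_closed; last exact: closed_eq.
by move=> A _; exact: det_continuous.
Qed.

Lemma compact_det1_entries_bounded n (B : R) :
  compact [set A : 'M[R]_n | \det A = 1 /\ forall i j, `|A i j| <= B].
Proof.
set box := [set v : 'rV[R]_(n * n) | forall k, (fun=> `[- B, B]%classic) k (v ord0 k)].
have box_compact : compact box by apply: rV_compact => k; exact: segment_compact.
have vec_box_compact : compact (vec_mx @` box).
  apply: continuous_compact => //; apply: continuous_subspaceT.
  apply: continuous_mx_entries => i j.
  have -> : (fun x : 'rV[R]_(n * n) => vec_mx x i j) = fun x => x 0 (mxvec_index i j).
    by apply/funext => x; rewrite mxE.
  exact: coord_continuous.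
have -> : [set A : 'M[R]_n | \det A = 1 /\ forall i j, `|A i j| <= B] =
    vec_mx @` box `&` [set A | \det A = 1].
  apply/seteqP; split => A /=.
    move=> [dA hA]; split => //; exists (mxvec A); last exact: mxvecK.
    move=> k; case/mxvec_indexP: k => i j.
    by rewrite mxvecE /= in_itv /= -ler_norml.
  move=> [[v hv <-] dA]; split => // i j; rewrite mxE.
  by have := hv (mxvec_index i j); rewrite /= in_itv /= -ler_norml.
by apply: compact_closedI => //; exact: closed_det1.
Qed.

End SpecialLinearCompact.

Lemma det_dim0 (R : comNzRingType) n (A : 'M[R]_n) : n = 0%N -> \det A = 1.
Proof. by case: n A => // A _; exact: det_mx00. Qed.

Lemma int_unit_sqr (x : int) : x \is a GRing.unit -> x * x = 1.
Proof. by move=> /orP [/eqP -> | /eqP ->]. Qed.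

Lemma unitmx_mulmx_neq0 n (gam : 'M[int]_n) (x : 'cV[int]_n) :
  gam \in unitmx -> x != 0 -> gam *m x != 0.
Proof. by move=> gam_unit; apply: contraNneq => gx0; rewrite -(mulKmx gam_unit x) gx0 mulmx0. Qed.

Lemma unitmx_col_neq0 n (gam : 'M[int]_n) j : gam \in unitmx -> col j gam != 0.
Proof.
move=> gam_unit; rewrite colE; apply: unitmx_mulmx_neq0 => //.
by apply/eqP => /matrixP /(_ j 0); rewrite !mxE !eqxx => /eqP; rewrite oner_eq0.
Qed.

Lemma unimodular_sign_fix k (gam : 'M[int]_k) : gam \in unitmx ->
  exists2 s : 'rV[int]_k, (forall j, s 0 j ^+ 2 = 1) & \det (gam *m diag_mx s) = 1.
Proof.
rewrite unitmxE => /int_unit_sqr gam2; case: k gam gam2 => [|k] gam gam2.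
  by exists 0 => [[] //|]; rewrite det_dim0.
exists (\row_j (if j == 0 then \det gam else 1)) => [j|].
  by rewrite mxE; case: eqP => _; rewrite ?expr2 ?mulr1.
rewrite det_mulmx det_diag (bigD1 0) //= big1 ?mulr1 => [|j /negbTE j0]; last by rewrite mxE j0.
by rewrite mxE eqxx.
Qed.

Section QuadraticForm.
Variable R : comNzRingType.

Definition qform n (G : 'M[R]_n) (x : 'cV[R]_n) : R := (x^T *m G *m x) 0 0.

Lemma qform_mulmx n m (G : 'M[R]_n) (A : 'M[R]_(n, m)) x :
  qform G (A *m x) = qform (A^T *m G *m A) x.
Proof. by rewrite /qform trmx_mul !mulmxA. Qed.

Lemma qformZ n (G : 'M[R]_n) c x : qform G (c *: x) = c ^+ 2 * qform G x.
Proof. by rewrite /qform !linearZ /= -!scalemxAl !mxE mulrA expr2. Qed.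

Lemma qform0 n (G : 'M[R]_n) : qform G 0 = 0.
Proof. by rewrite /qform mulmx0 mxE. Qed.

Lemma congr_mx_diag n m (G : 'M[R]_n) (A : 'M[R]_(n, m)) i :
  (A^T *m G *m A) i i = qform G (col i A).
Proof.
rewrite /qform colE trmx_mul trmx_delta -!mulmxA (mulmxA A^T) (mulmxA _ G).
rewrite -rowE -colE !mxE; apply: eq_bigr => l _; by rewrite !mxE.
Qed.

Lemma qform_gram n m (M : 'M[R]_(m, n)) x :
  qform (M^T *m M) x = \sum_i ((M *m x) i 0) ^+ 2.
Proof.
rewrite /qform (mulmxA x^T) -trmx_mul -mulmxA.
by rewrite mxE; apply: eq_bigr => i _; rewrite mxE expr2.
Qed.

End QuadraticForm.

Section SchurComplement.
Variables (F : fieldType) (k : nat) (a : F) (b : 'rV[F]_k) (H : 'M[F]_k).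
Hypothesis a_neq0 : a != 0.

Definition sym_block_mx : 'M[F]_(1 + k) := block_mx a%:M b b^T H.
Definition schur_compl : 'M[F]_k := H - a^-1 *: (b^T *m b).

Lemma sym_block_mx_factor : sym_block_mx =
  block_mx 1%:M 0 (a^-1 *: b^T) 1%:M *m block_mx a%:M b 0 schur_compl.
Proof.
rewrite mulmx_block !mul1mx !mul0mx !addr0 ?add0r mul_mx_scalar scalerA.
by rewrite mulfV // scale1r /schur_compl -scalemxAl addrC subrK.
Qed.

Lemma det_sym_block_mx : \det sym_block_mx = a * \det schur_compl.
Proof.
rewrite sym_block_mx_factor det_mulmx det_lblock det_ublock !det1 !mul1r.
by rewrite det_scalar expr1.
Qed.

Lemma qform_sym_block_mx (al : F) (z : 'cV[F]_k) :
  qform sym_block_mx (col_mx al%:M z) =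
    a * (al + a^-1 * (b *m z) 0 0) ^+ 2 + qform schur_compl z.
Proof.
rewrite /qform /sym_block_mx /schur_compl tr_col_mx tr_scalar_mx.
rewrite mul_row_block mul_row_col.
set be := (b *m z) 0 0.
have bz : b *m z = be%:M by rewrite [LHS]mx11_scalar.
have zb : z^T *m b^T = be%:M by rewrite -trmx_mul bz tr_scalar_mx.
rewrite !mulmxDl zb -!mulmxA bz mulmxBl mulmxBr -scalemxAl -scalemxAr.
rewrite -(mulmxA b^T) bz (mulmxA z^T b^T) zb -!scalar_mxM !mxE /= ?mulr1n.
by field.
Qed.

Lemma schur_compl_sym : H^T = H -> schur_compl^T = schur_compl.
Proof. by move=> hH; rewrite /schur_compl linearB /= linearZ /= trmx_mul trmxK hH. Qed.

End SchurComplement.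

Section HermiteReduction.
Variable R : realType.
Local Notation iR := (map_mx (intr : int -> R)).

Definition round_int (r : R) : int := Num.floor (r + 1/2).

Lemma round_intP (r : R) : (r - (round_int r)%:~R) ^+ 2 <= 1/4.
Proof.
have lb := floor_le (r + 1/2).
have ub : r + 1/2 < (round_int r + 1)%:~R by rewrite -floor_lt_int ltrDl.
rewrite intrD in ub; move: lb ub; rewrite -/(round_int r).
set f := (round_int r)%:~R => lb ub.
have : -(1/2) <= r - f <= 1/2 by apply/andP; split; lra.
by move=> /andP [h1 h2]; nra.
Qed.

Lemma det_congr_unimodular n (G : 'M[R]_n) (gam : 'M[int]_n) :
  gam \in unitmx -> \det ((iR gam)^T *m G *m iR gam) = \det G.
Proof.
rewrite unitmxE => /int_unit_sqr gam2.
rewrite !det_mulmx det_tr det_map_mx mulrC mulrA -rmorphM /= gam2 rmorph1.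
by rewrite mul1r.
Qed.

Lemma exists_near_min k (G : 'M[R]_k.+1) eps : 0 < eps ->
  (forall z : 'cV[int]_k.+1, z != 0 -> eps <= qform G (iR z)) ->
  exists2 z1 : 'cV[int]_k.+1, z1 != 0 &
    forall z, z != 0 -> 5 * qform G (iR z1) <= 6 * qform G (iR z).
Proof.
move=> eps_gt0 Gmin.
set E := [set qform G (iR z) | z in [set z : 'cV[int]_k.+1 | z != 0]].
have one_neq0 : (const_mx 1 : 'cV[int]_k.+1) != 0.
  by apply/eqP => /matrixP /(_ 0 0); rewrite !mxE => /eqP; rewrite oner_eq0.
have E_lb : lbound E eps by move=> _ [z z0 <-]; exact: Gmin.
have E_inf : has_inf E by split; [exists (qform G (iR (const_mx 1))), (const_mx 1)|exists eps].
have inf_ge : eps <= inf E by apply: lb_le_inf => //; case: E_inf.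
have [_ [z1 z1_neq0 <-] z1_near] :=
  inf_adherent (divr_gt0 (lt_le_trans eps_gt0 inf_ge) (ltr0n R 5)) E_inf.
exists z1 => // z z_neq0.
have : inf E <= qform G (iR z) by apply: ge_inf; [exists eps | exists z].
lra.
Qed.

(* A near-minimal vector is primitive: z1 = c w with |c| >= 2 would make w
   at least four times shorter. *)
Lemma near_min_col_unimodular k (G : 'M[R]_k.+1) (z1 : 'cV[int]_k.+1) :
  z1 != 0 -> (forall z, z != 0 -> 0 < qform G (iR z)) ->
  (forall z, z != 0 -> 5 * qform G (iR z1) <= 6 * qform G (iR z)) ->
  exists2 gam : 'M[int]_k.+1, gam \in unitmx & col 0 gam = z1.
Proof.
move=> z1_neq0 Gpos z1_min.
have [L L_unit [Rm _ [dd _ z1E]]] := int_Smith_normal_form z1.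
set c := dd`_0 * Rm 0 0.
have z1_cw : z1 = c *: col 0 L.
  rewrite z1E; apply/matrixP => i j; rewrite (ord1 j) !mxE big_ord1 !mxE.
  rewrite big_ord_recl !mxE /= mulr1n big1 ?addr0; first by rewrite /c -mulrA mulrC.
  by move=> l _; rewrite !mxE /= mulr0n mulr0.
have c_neq0 : c != 0 by apply: contraNneq z1_neq0 => c0; rewrite z1_cw c0 scale0r.
have w_neq0 : col 0 L != 0 by apply: contraNneq z1_neq0 => w0; rewrite z1_cw w0 scaler0.
have c2 : c * c = 1.
  have := z1_min _ w_neq0; have := Gpos _ w_neq0.
  rewrite z1_cw map_mxZ /= qformZ; set q := qform G _ => q_gt0 hq.
  have c2_lt : (c%:~R : R) ^+ 2 < 2 by nra.
  suff : c * c < 2 by move: c_neq0; lia.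
  by rewrite -(ltr_int R) intrM -expr2.
exists (c *: L); last by rewrite z1_cw; apply/matrixP => i j; rewrite !mxE.
rewrite unitmxE detZ unitrM unitrX ?(unitmxE _ L) //.
by apply/unitrP; exists c.
Qed.

Lemma sym_block_of_min k (G : 'M[R]_(1 + k)) eps : G^T = G -> 0 < eps ->
  (forall z : 'cV[int]_(1 + k), z != 0 -> eps <= qform G (iR z)) ->
  exists2 g1 : 'M[int]_(1 + k), g1 \in unitmx &
    exists a b H, [/\ (iR g1)^T *m G *m iR g1 = sym_block_mx a b H, H^T = H, eps <= a &
      forall x, x != 0 -> 5 * a <= 6 * qform (sym_block_mx a b H) (iR x)].
Proof.
move=> Gsym eps_gt0 Gmin.
have Gpos z : z != 0 -> 0 < qform G (iR z).
  by move=> z0; exact: lt_le_trans eps_gt0 (Gmin z z0).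
have [z1 z1_neq0 z1_min] := exists_near_min eps_gt0 Gmin.
have [g1 g1_unit g1_col] := near_min_col_unimodular z1_neq0 Gpos z1_min.
pose G1 : 'M[R]_(1 + k) := (iR g1)^T *m G *m iR g1.
have G1sym : G1^T = G1 by rewrite /G1 !trmx_mul trmxK Gsym mulmxA.
have qform_G1 x : qform G1 (iR x) = qform G (iR (g1 *m x)).
  by rewrite map_mxM qform_mulmx.
have G1_blocks : G1 = sym_block_mx (qform G (iR z1)) (ursubmx G1) (drsubmx G1).
  rewrite /sym_block_mx trmx_ursub G1sym -[LHS]submxK; congr block_mx.
  apply/matrixP => i j; rewrite (ord1 i) (ord1 j) [RHS]mxE mulr1n 2![LHS]mxE.
  have -> : lshift k (0 : 'I_1) = 0 :> 'I_(1 + k) by apply/val_inj.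
  by rewrite /G1 congr_mx_diag -map_col g1_col.
exists g1 => //; exists (qform G (iR z1)), (ursubmx G1), (drsubmx G1).
split; [exact: G1_blocks | by rewrite trmx_drsub G1sym | exact: Gmin | move=> x x_neq0].
by rewrite -G1_blocks qform_G1; apply/z1_min/unitmx_mulmx_neq0.
Qed.

Section SizeReduction.
Variables (k : nat) (a : R) (b : 'rV[R]_k) (H : 'M[R]_k).
Hypothesis a_gt0 : 0 < a.

Local Notation rounding z := (round_int (a^-1 * (b *m z) 0 0)).

Lemma qform_sym_block_rounded (z : 'cV[R]_k) :
  qform (sym_block_mx a b H) (col_mx ((- rounding z)%:~R)%:M z) <=
    a / 4 + qform (schur_compl a b H) z.
Proof.
rewrite qform_sym_block_mx ?gt_eqF // intrN (addrC (- _)).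
have := ler_wpM2l (ltW a_gt0) (round_intP (a^-1 * (b *m z) 0 0)); lra.
Qed.

Lemma schur_compl_min :
  (forall x : 'cV[int]_(1 + k), x != 0 -> 5 * a <= 6 * qform (sym_block_mx a b H) (iR x)) ->
  forall z : 'cV[int]_k, z != 0 -> 7/12 * a <= qform (schur_compl a b H) (iR z).
Proof.
move=> a_min z z_neq0.
pose x : 'cV[int]_(1 + k) := col_mx (- rounding (iR z))%:M z.
have x_neq0 : x != 0.
  by apply: contraNneq z_neq0; rewrite -col_mx0 => /eq_col_mx [_ ->].
have := a_min x x_neq0; rewrite map_col_mx map_scalar_mx /=.
have := qform_sym_block_rounded (iR z).
set q1 := qform (sym_block_mx a b H) _; set q2 := qform (schur_compl a b H) _.
lra.
Qed.

Definition size_reduce_mx (g2 : 'M[int]_k) : 'M[int]_(1 + k) :=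
  block_mx 1%:M (- \row_j rounding (col j (iR g2))) 0 g2.

Lemma det_size_reduce_mx g2 : \det (size_reduce_mx g2) = \det g2.
Proof. by rewrite det_ublock det1 mul1r. Qed.

Lemma size_reduce_mx_diag_l g2 :
  ((iR (size_reduce_mx g2))^T *m sym_block_mx a b H *m iR (size_reduce_mx g2))
    (lshift k 0) (lshift k 0) = a.
Proof.
rewrite congr_mx_diag map_block_mx block_mxEv col_col_mx !colKl.
have -> : col 0 (iR (1%:M : 'M[int]_1)) = (1%:M : 'M[R]_1).
  by apply/matrixP => i j; rewrite !ord1 !mxE.
have -> : col 0 (iR (0 : 'M[int]_(k, 1))) = 0 by apply/matrixP => i j; rewrite !mxE.
rewrite qform_sym_block_mx ?gt_eqF // mulmx0 mxE mulr0 addr0 expr1n.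
by rewrite mulr1 qform0 addr0.
Qed.

Lemma size_reduce_mx_diag_r g2 j :
  ((iR (size_reduce_mx g2))^T *m sym_block_mx a b H *m iR (size_reduce_mx g2))
    (rshift 1 j) (rshift 1 j) <=
    a / 4 + qform (schur_compl a b H) (col j (iR g2)).
Proof.
rewrite congr_mx_diag map_block_mx block_mxEv col_col_mx !colKr.
have -> : col j (iR (- \row_j rounding (col j (iR g2)))) =
    ((- rounding (col j (iR g2)))%:~R)%:M.
  by apply/matrixP => i l; rewrite !ord1 !mxE eqxx mulr1n.
exact: qform_sym_block_rounded.
Qed.

End SizeReduction.

(* Induction on the dimension: move a near-minimal vector to the first basis
   vector, reduce the Schur complement, then size-reduce against the first
   vector. *)
Lemma hermite_reduction k (eps V : R) : 0 < eps ->
  exists2 C, 0 <= C & forall G : 'M[R]_k, G^T = G ->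
    (forall z : 'cV[int]_k, z != 0 -> eps <= qform G (iR z)) -> \det G <= V ->
    exists2 gam : 'M[int]_k, gam \in unitmx &
      forall i, ((iR gam)^T *m G *m iR gam) i i <= C.
Proof.
elim: k eps V => [|k IH] eps V eps_gt0.
  by exists 0 => // G _ _ _; exists 1%:M => [|[]]; first exact: unitmx1.
pose Vp := Num.max V 0.
have [Vp_ge0 V_le] : 0 <= Vp /\ V <= Vp by rewrite !le_max !lexx orbT.
have eps'_gt0 : 0 < 7/12 * eps by lra.
have [C2 C2_ge0 hC2] := IH (7/12 * eps) (Vp / eps) eps'_gt0.
exists (Vp + 3 * C2) => [|G Gsym Gmin GV]; first lra.
have [g1 g1_unit [a [b [H [G1E Hsym eps_le_a a_min]]]]] := sym_block_of_min Gsym eps_gt0 Gmin.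
have a_gt0 : 0 < a by lra.
set S := schur_compl a b H.
have detG : \det G = a * \det S.
  by rewrite -(det_congr_unimodular G g1_unit) G1E det_sym_block_mx ?gt_eqF.
have S_min z : z != 0 -> 7/12 * eps <= qform S (iR z).
  move=> z_neq0; have := schur_compl_min a_gt0 a_min z_neq0; lra.
have S_det : \det S <= Vp / eps.
  rewrite ler_pdivlMr //; have : a * \det S <= Vp by lra.
  by case: (lerP (\det S) 0) => ?; nra.
have [g2 g2_unit g2_diag] := hC2 S (schur_compl_sym a b Hsym) S_min S_det.
set P := size_reduce_mx a b g2.
have P_unit : P \in unitmx by rewrite unitmxE det_size_reduce_mx -unitmxE.
exists (g1 *m P); first by rewrite unitmx_mul g1_unit.
have diagE i : ((iR (g1 *m P))^T *m G *m iR (g1 *m P)) i i =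
    ((iR P)^T *m sym_block_mx a b H *m iR P) i i.
  by rewrite -G1E map_mxM !trmx_mul !mulmxA.
have diag_r j : ((iR P)^T *m sym_block_mx a b H *m iR P) (rshift 1 j) (rshift 1 j)
    <= a / 4 + C2.
  apply: le_trans (size_reduce_mx_diag_r b H a_gt0 g2 j) _.
  by rewrite lerD2l -congr_mx_diag.
have a_le : a <= Vp + 2 * C2.
  have [k0|k_gt0] := posnP k.
    by move: detG; rewrite (det_dim0 S) // mulr1; lra.
  have := a_min _ (unitmx_col_neq0 (rshift 1 (Ordinal k_gt0)) P_unit).
  rewrite map_col -congr_mx_diag; have := diag_r (Ordinal k_gt0); lra.
move=> i; rewrite diagE -[i](@fintype.splitK 1 k); case: (fintype.split _) => [i0|j] /=.
  by rewrite (ord1 i0) size_reduce_mx_diag_l; lra.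
by have := diag_r j; lra.
Qed.

End HermiteReduction.

Section Orbit.
Variable R : realType.
Local Notation iR := (map_mx (intr : int -> R)).

Lemma sqr_coord_le_sum n (y : 'cV[R]_n) i : y i 0 ^+ 2 <= \sum_j y j 0 ^+ 2.
Proof. by rewrite (bigD1 i) //= lerDl sumr_ge0 // => j _; exact: sqr_ge0. Qed.

Lemma sqr_entry_le_gram m n (M : 'M[R]_(m, n)) i j : M i j ^+ 2 <= (M^T *m M) j j.
Proof.
have -> : (M^T *m M) j j = \sum_l col j M l 0 ^+ 2.
  by rewrite mxE; apply: eq_bigr => l _; rewrite !mxE expr2.
by have := sqr_coord_le_sum (col j M) i; rewrite mxE.
Qed.

Lemma prod_le_common_bound n (x : 'I_n -> R) (s : R) : (0 < n)%N ->
  (forall i, 0 <= x i <= s) -> s <= 1 -> \prod_i x i <= s.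
Proof.
case: n x => // n x _ x_bnd s_le1.
have s_ge0 : 0 <= s by have /andP [x0 xs] := x_bnd ord0; exact: le_trans xs.
apply: (@le_trans _ _ (\prod_(i < n.+1) s)); first by apply: ler_prod => i _; exact: x_bnd.
by rewrite prodr_const card_ord exprS -[leRHS]mulr1 ler_wpM2l // exprn_ile1.
Qed.

Lemma lattice_min_sqnorm d (g : 'M[R]_d) : g \in unitmx ->
  exists2 e : R, 0 < e & forall u : 'cV[int]_d, u != 0 ->
    e <= \sum_i (g *m iR u) i 0 ^+ 2.
Proof.
move=> g_unit; pose A := invmx g; pose N := 1 + \sum_i \sum_j `|A i j|.
have N_gt0 : 0 < N by rewrite ltr_pwDl // !sumr_ge0 // => i _; rewrite sumr_ge0.
exists (N ^- 2) => [|u u_neq0]; first by rewrite invr_gt0 exprn_gt0.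
set y := g *m iR u; rewrite leNgt; apply/negP => y_small.
have y_coord j : `|y j 0| < N^-1.
  have : `|y j 0| ^+ 2 < N^-1 ^+ 2.
    rewrite real_normK ?num_real // exprVn.
    exact: le_lt_trans (sqr_coord_le_sum y j) y_small.
  have := normr_ge0 (y j 0); have : 0 < N^-1 by rewrite invr_gt0.
  nra.
have [i ui] : exists i, u i 0 != 0.
  apply/existsP; apply: contraNT u_neq0; rewrite negb_exists => /forallP u0.
  by apply/eqP/matrixP => r c; rewrite (ord1 c) mxE; exact/eqP/negbNE/u0.
have : 1 <= `|(iR u) i 0| by rewrite mxE -intr_norm ler1z; move: ui; lia.
rewrite -[iR u](mulKmx g_unit) -/A -/y mxE; apply/negP; rewrite -ltNge.
apply: (le_lt_trans (ler_norm_sum _ _ _)).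
apply: (@le_lt_trans _ _ (\sum_j `|A i j| * N^-1)).
  by apply: ler_sum => j _; rewrite normrM ler_wpM2l // ltW.
rewrite -mulr_suml ltr_pdivrMr // mul1r /N.
rewrite [X in _ < _ + X](bigD1 i) //= ltr_pwDl // lerDl.
by rewrite sumr_ge0 // => l _; rewrite sumr_ge0.
Qed.

Lemma tau_mulmx d (g : 'M[R]_d) v (x : 'cV[R]_d) (c : R) :
  tau g v *m col_mx x c%:M = col_mx (g *m x + c *: v) c%:M.
Proof. by rewrite /tau mul_block_col mul0mx add0r mul1mx mul_mx_scalar. Qed.

Lemma prod_diag_expR_mulmx n (t : 'rV[R]_n) (w : 'cV[R]_n) : \sum_i t 0 i = 0 ->
  \prod_i (diag_mx (map_mx expR t) *m w) i 0 = \prod_i w i 0.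
Proof.
move=> t0; rewrite mul_diag_mx; under eq_bigr do rewrite !mxE.
by rewrite big_split /= -expR_sum t0 expR0 mul1r.
Qed.

Lemma det_Aplus_tau d (g : 'M[R]_d) v a : \det g = 1 -> Aplus a ->
  \det (a *m tau g v) = 1.
Proof.
move=> g1 [t [t0 [_ ->]]]; rewrite det_mulmx det_diag /tau det_ublock det1 g1 !mulr1.
by under eq_bigr do rewrite mxE; rewrite -expR_sum t0 expR0.
Qed.

(* Either the last coordinate n of z vanishes, and the expanding coordinates
   make |a tau z|^2 at least |g u|^2, or the coordinate product of a tau z is
   n N(g u + n v), whose square is at most |a tau z|^2 once all coordinates
   are below 1. *)
Lemma qform_orbit_lbound d (g : 'M[R]_d) (v : 'cV[R]_d) (a : 'M[R]_(d + 1)) (del e : R) :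
  Aplus a -> 0 < del ->
  (forall u : 'cV[int]_d, u != 0 -> e <= \sum_i (g *m iR u) i 0 ^+ 2) ->
  (forall (n : int) (u : 'cV[int]_d), n != 0 ->
     del <= `|n%:~R * Nw (g *m iR u + n%:~R *: v)|) ->
  forall z : 'cV[int]_(d + 1), z != 0 ->
    Num.min 1 (Num.min (del ^+ 2) e) <= qform ((a *m tau g v)^T *m (a *m tau g v)) (iR z).
Proof.
move=> [t [t0 [t_pos ->]]] del_gt0 e_le del_le z z_neq0.
set m := Num.min 1 (Num.min (del ^+ 2) e).
have [min_le1 min_le_del min_le_e] : [/\ m <= 1, m <= del ^+ 2 & m <= e].
  by rewrite !ge_min !lexx !orbT.
rewrite qform_gram -[z]vsubmxK map_col_mx.
set u := usubmx z; set n := dsubmx z 0 0.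
have -> : iR (dsubmx z) = (n%:~R)%:M by rewrite [LHS]mx11_scalar mxE.
rewrite -mulmxA tau_mulmx; set w := g *m iR u + n%:~R *: v.
set y := diag_mx _ *m _.
have yE i : y i 0 = expR (t 0 i) * col_mx w (n%:~R)%:M i 0.
  by rewrite /y mul_diag_mx mxE [X in X * _]mxE.
have [n0|n_neq0] := eqVneq n 0.
  have u_neq0 : u != 0.
    apply: contraNneq z_neq0 => u0; rewrite -[z]vsubmxK -/u u0.
    apply/eqP; rewrite -col_mx0; congr col_mx.
    by apply/matrixP => i j; rewrite !ord1 [RHS]mxE.
  apply: le_trans min_le_e (le_trans (e_le u u_neq0) _).
  rewrite big_split_ord /= -[leLHS]addr0 lerD ?sumr_ge0 // => [|i _]; last exact: sqr_ge0.
  apply: ler_sum => i _; rewrite yE col_mxEu /w n0 scale0r addr0 exprMn ler_peMl ?sqr_ge0 //.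
  have := expR_ge1Dx (t 0 (lshift 1 i)); have := t_pos (lshift 1 i) (ltn_ord i).
  by move: (expR _) => x ? ?; nra.
have [s_ge1|s_lt1] := lerP 1 (\sum_i y i 0 ^+ 2); first exact: le_trans min_le1 s_ge1.
apply: le_trans min_le_del _.
have prod_y : \prod_i y i 0 = Nw w * n%:~R.
  rewrite prod_diag_expR_mulmx // big_split_ord big_ord1 col_mxEd mxE eqxx mulr1n.
  by congr (_ * _); apply: eq_bigr => i _; rewrite col_mxEu.
have : \prod_i y i 0 ^+ 2 <= \sum_i y i 0 ^+ 2.
  apply: prod_le_common_bound; [by rewrite addn1 | | exact: ltW].
  by move=> i; rewrite sqr_ge0 sqr_coord_le_sum.
rewrite prodrXl prod_y; apply: le_trans.
have := del_le n u n_neq0; rewrite -/w mulrC -(ler_sqr (ltW del_gt0)) ?nnegrE //.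
by rewrite real_normK ?num_real.
Qed.

End Orbit.

Section Bounded.
Variable R : realType.
Local Notation iR := (map_mx (intr : int -> R)).

Lemma not_L_lbound d (g : 'M[R]_d) (v : 'cV[R]_d) : ~ is_L g v ->
  exists2 del : R, 0 < del & forall (n : int) (u : 'cV[int]_d), n != 0 ->
    del <= `|n%:~R * Nw (g *m iR u + n%:~R *: v)|.
Proof.
move=> notL.
set E := [set `|(n%:~R : R) * Ngrid g (n%:~R *: v)| | n in [set n : int | n != 0]].
have E_lb : lbound E 0 by move=> _ [n _ <-].
have E_neq0 : E !=set0 by exists `|1%:~R * Ngrid g (1%:~R *: v)|, 1.
exists (inf E) => [|n u n_neq0].
  by rewrite lt_neqAle eq_sym lb_le_inf // andbT; apply/eqP.
have Ngrid_le w : 0 <= Ngrid g w <= `|Nw (g *m iR u + w)|.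
  have grid_u : [set `|Nw x| | x in grid g w] `|Nw (g *m iR u + w)|.
    by exists (g *m iR u + w) => //; exists u.
  apply/andP; split; last by apply: ge_inf => //; exists 0 => _ [x _ <-].
  by apply: lb_le_inf; [exists `|Nw (g *m iR u + w)| | move=> _ [x _ <-]].
have /andP [N_ge0 N_le] := Ngrid_le (n%:~R *: v).
apply: le_trans (_ : `|n%:~R * Ngrid g (n%:~R *: v)| <= _).
  by apply: ge_inf; [exists 0 | exists n].
by rewrite !normrM (ger0_norm N_ge0) ler_wpM2l.
Qed.

(* Flipping signs of columns makes the determinant 1 without changing the
   column lengths, which bound the entries. *)
Lemma bounded_in_X_of_reduced k (S : set 'M[R]_k) (C : R) :
  (forall M, S M -> \det M = 1 /\ exists2 gam : 'M[int]_k, gam \in unitmx &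
     forall i, ((iR gam)^T *m (M^T *m M) *m iR gam) i i <= C) ->
  bounded_in_X S.
Proof.
move=> S_red.
exists [set A | \det A = 1 /\ forall i j, `|A i j| <= C + 1].
split; first exact: compact_det1_entries_bounded.
split => [A [] //|M /S_red [M1 [gam gam_unit gam_red]]].
have [s s2 gam_s1] := unimodular_sign_fix gam_unit.
exists (M *m iR (gam *m diag_mx s)); last by exists (gam *m diag_mx s).
split; first by rewrite det_mulmx M1 det_map_mx gam_s1 rmorph1 mulr1.
move=> i j.
have h_sqr : (M *m iR (gam *m diag_mx s)) i j ^+ 2 <= C.
  rewrite map_mxM mulmxA map_diag_mx mul_mx_diag mxE exprMn [X in _ * X ^+ 2]mxE.
  rewrite -rmorphXn s2 rmorph1 mulr1.
  apply: le_trans (sqr_entry_le_gram _ i j) _.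
  by rewrite trmx_mul !mulmxA -(mulmxA _ M^T).
move: h_sqr; set x := _ i j; have := normr_ge0 x; rewrite -real_normK ?num_real //.
nra.
Qed.

End Bounded.

Theorem lemma2p2 (R : realType) (d : nat) (hd : (2 <= d)%N)
  (g : 'M[R]_d) (v : 'cV[R]_d) (hg : \det g = 1) :
  ~ bounded_in_X (Aplus_orbit g v) -> is_L g v.
Proof.
move=> unbounded; apply: contrapT => notL; apply: unbounded.
have [del del_gt0 del_le] := not_L_lbound notL.
have g_unit : g \in unitmx by rewrite unitmxE hg unitr1.
have [e e_gt0 e_le] := lattice_min_sqnorm g_unit.
set eps := Num.min 1 (Num.min (del ^+ 2) e).
have eps_gt0 : 0 < eps by rewrite !lt_min ltr01 exprn_gt0.
have [C _ reduceC] := hermite_reduction (d + 1) 1 eps_gt0.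
apply: bounded_in_X_of_reduced => _ [a Aa <-].
have det1 := det_Aplus_tau v hg Aa.
split => //; apply: reduceC.
- by rewrite trmx_mul trmxK.
- exact: qform_orbit_lbound.
- by rewrite det_mulmx det_tr det1 mulr1.
Qed.
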